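(* Consider the data-selling model described in the context, with network $G$ on $n$ buyers and cost $\gamma>0$. Suppose $G$ is not a disjoint union of complete graphs (this includes the case that $G$ is not complete). For $z_0>0$ define: - $z^o(z_0)=\sqrt{\alpha(G)/\gamma}-z_0$, the precision of the seller-optimal contract; - $z^*(z_0)$, the precision of the socially efficient contract, i.e. the positive solution $z$ of $$\sum_{i\in N}\frac{n_i+1}{(z_0+(n_i+1)z)^2}=\gamma.$$ Then there exists $\bar z>0$ such that $z^*(z_0)<z^o(z_0)$ for all $z_0\in(0,\bar z)$.
   Context: $N=\{1,\dots,n\}$ is the set of buyers and $G$ is an undirected simple network on $N$. $n_i$ denotes the degree (number of neighbors) of buyer $i$ in $G$. $\alpha(G)$ is the independence number of $G$, the largest size of a set of nodes no two of which are adjacent. A graph is a disjoint union of complete graphs if each of its connected components is a complete graph. Setting: the state is $\theta\sim N(0,1/z_0)$. A seller sells a common-precision signal $\theta+\varepsilon_i$, with $\varepsilon_i\sim N(0,1/z)$, to a target set of buyers at marginal cost $\gamma z$. Buyers share signals with their network neighbors and have quadratic loss $-(a_i-\theta)^2$. In this setting the seller-optimal precision is $z^o$ and the welfare-maximizing precision is $z^*$, as defined in the claim. *)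

From mathcomp Require Import all_boot all_order all_algebra.
Set Implicit Arguments. Unset Strict Implicit. Unset Printing Implicit Defensive.
Import Order.TTheory GRing.Theory Num.Theory.

Definition simple_graph n (e : rel 'I_n) : Prop :=
  symmetric e /\ irreflexive e.

Definition degree n (e : rel 'I_n) (i : 'I_n) : nat := #|[set j | e i j]|.

Definition independent n (e : rel 'I_n) (S : {set 'I_n}) : bool :=
  [forall i in S, forall j in S, ~~ e i j].

Definition indep_number n (e : rel 'I_n) : nat :=
  \max_(S : {set 'I_n} | independent e S) #|S|.

(* G is a disjoint union of complete graphs: every connected component is
   complete, i.e. any two distinct nodes in the same component are adjacent. *)
Definition disjoint_union_of_cliques n (e : rel 'I_n) : Prop :=
  forall i j : 'I_n, i != j -> connect e i j -> e i j.

Local Open Scope ring_scope.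

Definition welfare_foc (R : realFieldType) n (e : rel 'I_n) (z0 z : R) : R :=
  \sum_(i < n) ((degree e i).+1%:R / (z0 + (degree e i).+1%:R * z) ^+ 2).

Definition z_seller (R : rcfType) n (e : rel 'I_n) (gamma z0 : R) : R :=
  Num.sqrt ((indep_number e)%:R / gamma) - z0.

From mathcomp Require Import all_boot all_order all_algebra.
From mathcomp Require Import ring lra.
Import Order.TTheory GRing.Theory Num.Theory.
Set Implicit Arguments. Unset Strict Implicit. Unset Printing Implicit Defensive.
Local Open Scope ring_scope.

(* At the efficient precision z, gamma = sum_i (n_i+1)/(z0+(n_i+1)z)^2 is at
   most S/z^2 with S = sum_i 1/(n_i+1), so z <= sqrt(S/gamma) for every z0 > 0.
   By the Caro-Wei theorem S <= alpha(G), and the inequality is strict as soon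
   as G has an induced path a - b - c, i.e. is not a disjoint union of cliques;
   then sqrt(S/gamma) < sqrt(alpha/gamma) - z0 = z^o(z0) for all small z0.
   The strict Caro-Wei bound follows the greedy algorithm that repeatedly picks
   a vertex v of minimum degree and deletes its closed neighbourhood B: the
   vertices of B contribute at most 1 to S, the others at most their
   contribution in the smaller graph, strictly so if an edge leaves B.  If no
   edge leaves B, minimality of deg v makes B a clique, and an induced path
   then avoids B and survives in the smaller graph. *)

Definition nbhd_in n (e : rel 'I_n) (U : {set 'I_n}) (i : 'I_n) : {set 'I_n} :=
  [set j in U | e i j].

Definition deg_in n (e : rel 'I_n) (U : {set 'I_n}) (i : 'I_n) : nat :=
  #|nbhd_in e U i|.

Definition closed_nbhd_in n (e : rel 'I_n) (U : {set 'I_n}) (v : 'I_n) : {set 'I_n} :=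
  v |: nbhd_in e U v.

Definition caro_wei_sum (R : realFieldType) n (e : rel 'I_n) (U : {set 'I_n}) : R :=
  \sum_(i in U) ((deg_in e U i).+1%:R)^-1.

Definition induced_P3 n (e : rel 'I_n) (U : {set 'I_n}) : Prop :=
  exists a b c,
    [/\ a \in U, b \in U, c \in U & [/\ e a b, e b c, a != c & ~~ e a c]].

Lemma invr_natS_le (R : realFieldType) (a b : nat) :
  (a <= b)%N -> (b.+1%:R : R)^-1 <= (a.+1%:R)^-1.
Proof. by move=> le_ab; rewrite lef_pV2 ?posrE ?ltr0Sn // ler_nat ltnS. Qed.

Lemma invr_natS_lt (R : realFieldType) (a b : nat) :
  (a < b)%N -> (b.+1%:R : R)^-1 < (a.+1%:R)^-1.
Proof. by move=> lt_ab; rewrite ltf_pV2 ?posrE ?ltr0Sn // ltr_nat ltnS. Qed.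

Lemma ler_lt_sum (R : numDomainType) (I : finType) (A : {pred I}) (F G : I -> R) k :
  k \in A -> (forall i, i \in A -> F i <= G i) -> F k < G k ->
  \sum_(i in A) F i < \sum_(i in A) G i.
Proof.
move=> kA le_FG lt_FGk; rewrite (bigD1 k) // [ltRHS](bigD1 k) //=.
by apply: ltr_leD => //; apply: ler_sum => i /andP[iA _]; apply: le_FG.
Qed.

Lemma independent_setU1 n (e : rel 'I_n) (I : {set 'I_n}) v :
  symmetric e -> irreflexive e -> independent e I ->
  (forall j, j \in I -> ~~ e v j) -> independent e (v |: I).
Proof.
move=> esym eirr /forall_inP indI nadj.
apply/forall_inP => i /setU1P[-> | iI]; apply/forall_inP => j /setU1P[-> | jI].
- by rewrite eirr.
- exact: nadj.
- by rewrite esym nadj.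
- exact: (forall_inP (indI i iI)).
Qed.

Lemma induced_P3_setD n (e : rel 'I_n) (U B : {set 'I_n}) :
  symmetric e ->
  (forall x y, x \in B -> y \in U -> e x y -> y \in B) ->
  (forall x y, x \in B -> y \in B -> x != y -> e x y) ->
  induced_P3 e U -> induced_P3 e (U :\: B).
Proof.
move=> esym closedB cliqueB [a [b [c [aU bU cU [eab ebc ac nac]]]]].
have bB : b \notin B.
  apply: contraNN nac => bB; apply: cliqueB ac.
    by apply: closedB bB aU _; rewrite esym.
  exact: closedB bB cU ebc.
have aB : a \notin B by apply: contraNN bB => aB; apply: closedB aB bU eab.
have cB : c \notin B by apply: contraNN bB => cB; apply: closedB cB bU _; rewrite esym.
by exists a, b, c; rewrite !inE aB bB cB aU bU cU.
Qed.

Lemma transitive_adj_cliques n (e : rel 'I_n) :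
  (forall a b c, e a b -> e b c -> a != c -> e a c) ->
  disjoint_union_of_cliques e.
Proof.
move=> adj_trans i j ij /connectP[p pth j_last].
have reach x q : path e x q -> (i = x \/ e i x) -> i = last x q \/ e i (last x q).
  elim: q x => [|y q IHq] x //= /andP[exy pq] i_x; apply: IHq => //.
  have [<- | iy] := eqVneq i y; first by left.
  by right; case: i_x => [-> // | eix]; apply: adj_trans eix exy iy.
case: (reach i p pth (or_introl erefl)) => [i_last | ]; last by rewrite -j_last.
by rewrite j_last -i_last eqxx in ij.
Qed.

Lemma not_cliques_induced_P3 n (e : rel 'I_n) :
  ~ disjoint_union_of_cliques e -> induced_P3 e setT.
Proof.
move=> not_cliques.
have [/existsP[a /existsP[b /existsP[c /and4P[eab ebc ac nac]]]] | noP3] :=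
  boolP [exists a, exists b, exists c, [&& e a b, e b c, a != c & ~~ e a c]].
  by exists a, b, c; rewrite !inE.
case: not_cliques; apply: transitive_adj_cliques => a b c eab ebc ac.
apply: contraNT noP3 => nac; apply/existsP; exists a; apply/existsP; exists b.
by apply/existsP; exists c; rewrite eab ebc ac nac.
Qed.

Section CaroWei.

Variables (R : realFieldType) (n : nat) (e : rel 'I_n).

Local Notation inv_deg U i := (((deg_in e U i).+1%:R : R)^-1).

Lemma deg_in_subset (V U : {set 'I_n}) i :
  V \subset U -> (deg_in e V i <= deg_in e U i)%N.
Proof.
move=> VU; apply/subset_leq_card/subsetP => j.
by rewrite !inE => /andP[/(subsetP VU) -> ->].
Qed.

Lemma sum_inv_deg_subset (V U : {set 'I_n}) :
  V \subset U -> \sum_(i in V) inv_deg U i <= caro_wei_sum R e V.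
Proof. by move=> VU; apply: ler_sum => i _; apply/invr_natS_le/deg_in_subset. Qed.

Lemma sum_inv_deg_subset_lt (V U : {set 'I_n}) x y :
  V \subset U -> x \in V -> y \in U :\: V -> e x y ->
  \sum_(i in V) inv_deg U i < caro_wei_sum R e V.
Proof.
move=> VU xV yUV exy.
apply: (ler_lt_sum xV) => [i _|]; first exact/invr_natS_le/deg_in_subset.
apply/invr_natS_lt/proper_card/properP; split.
  by apply/subsetP => j; rewrite !inE => /andP[/(subsetP VU) -> ->].
by case/setDP: yUV => yU yV; exists y; rewrite !inE ?yU ?exy // (negbTE yV).
Qed.

Hypotheses (esym : symmetric e) (eirr : irreflexive e).

Section GreedyStep.

Variables (U : {set 'I_n}) (v : 'I_n).
Hypotheses (vU : v \in U)
  (v_min : forall j, j \in U -> (deg_in e U v <= deg_in e U j)%N).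

Local Notation B := (closed_nbhd_in e U v).

Lemma closed_nbhd_in_sub : B \subset U.
Proof. by apply/subsetP => j /setU1P[-> // | ]; rewrite inE => /andP[]. Qed.

Lemma card_closed_nbhd_in : #|B| = (deg_in e U v).+1.
Proof. by rewrite cardsU1 inE eirr andbF. Qed.

Lemma sum_closed_nbhd_le : \sum_(i in B) inv_deg U i <= 1.
Proof.
have le_v i : i \in B -> inv_deg U i <= inv_deg U v.
  by move=> iB; exact/invr_natS_le/v_min/(subsetP closed_nbhd_in_sub).
apply: le_trans (ler_sum _ le_v) _.
by rewrite sumr_const card_closed_nbhd_in -(mulr_natr (inv_deg U v)) mulVf ?pnatr_eq0.
Qed.

(* If no edge leaves B, a neighbour x of v has all its neighbours in B :\ x,
   a set of deg v <= deg x elements, so x is adjacent to all of it. *)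
Lemma closed_nbhd_in_clique :
  (forall x y, x \in B -> y \in U -> e x y -> y \in B) ->
  forall x y, x \in B -> y \in B -> x != y -> e x y.
Proof.
move=> closedB x y xB yB xy.
have [xv | xN] := setU1P xB.
  by move: yB xy; rewrite xv eq_sym => /setU1P[-> | ]; rewrite ?eqxx // inE => /andP[].
have xU : x \in U by move: xN; rewrite inE => /andP[].
have nbhd_sub : nbhd_in e U x \subset B :\ x.
  apply/subsetP => j; rewrite inE => /andP[jU exj].
  rewrite in_setD1 (closedB x j xB jU exj) andbT.
  by apply: contraTneq exj => ->; rewrite eirr.
have : nbhd_in e U x == B :\ x.
  rewrite eqEcard nbhd_sub /=.
  move: (cardsD1 x B); rewrite xB card_closed_nbhd_in add1n => -[<-].
  exact: v_min.
move/eqP=> nbhdE; have : y \in B :\ x by rewrite in_setD1 yB eq_sym xy.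
by rewrite -nbhdE inE => /andP[].
Qed.

Lemma caro_wei_step :
  caro_wei_sum R e U <= 1 + caro_wei_sum R e (U :\: B) /\
  (induced_P3 e U ->
   caro_wei_sum R e U < 1 + caro_wei_sum R e (U :\: B) \/ induced_P3 e (U :\: B)).
Proof.
have sumE : caro_wei_sum R e U =
    \sum_(i in B) inv_deg U i + \sum_(i in U :\: B) inv_deg U i.
  by rewrite /caro_wei_sum (big_setID B) (setIidPr closed_nbhd_in_sub).
rewrite sumE; split.
  exact: lerD sum_closed_nbhd_le (sum_inv_deg_subset (subsetDl U B)).
move=> P3U.
have [/exists_inP[x xB /exists_inP[y yUB exy]] | /exists_inPn not_closed] :=
  boolP [exists x in B, exists y in U :\: B, e x y].
  have xUUB : x \in U :\: (U :\: B).
    by rewrite setDDr setDv set0U (setIidPr closed_nbhd_in_sub).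
  rewrite esym in exy.
  by left; apply: ler_ltD sum_closed_nbhd_le
    (sum_inv_deg_subset_lt (subsetDl U B) yUB xUUB exy).
have closedB x y : x \in B -> y \in U -> e x y -> y \in B.
  move=> xB yU exy; apply: contraNT (not_closed x xB) => yB.
  by apply/exists_inP; exists y; rewrite // inE yB.
by right; apply: induced_P3_setD P3U => //; apply: closed_nbhd_in_clique.
Qed.

End GreedyStep.

Lemma caro_wei (U : {set 'I_n}) :
  exists2 I : {set 'I_n}, I \subset U &
    [/\ independent e I, caro_wei_sum R e U <= #|I|%:R &
        (induced_P3 e U -> caro_wei_sum R e U < #|I|%:R)].
Proof.
have [k] := ubnP #|U|; elim: k U => // k IH U ltUk.
have [-> | [u uU]] := set_0Vmem U.
  exists set0; rewrite ?sub0set // /caro_wei_sum big_set0 cards0; split => //.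
    by apply/forall_inP => i; rewrite inE.
  by case=> [a [b [c [] ]]]; rewrite inE.
case: (arg_minnP (deg_in e U) uU) => v vU v_min.
set U' := U :\: closed_nbhd_in e U v.
have vU' : v \notin U' by rewrite in_setD /closed_nbhd_in setU11.
have ltU'k : (#|U'| < k)%N.
  apply: leq_trans _ (ltUk : (#|U| <= k)%N).
  by apply/proper_card/properP; split; [exact: subsetDl | exists v].
have [I' I'U' [indI' leI' ltI']] := IH U' ltU'k.
have [le_step lt_step] := caro_wei_step vU v_min.
have cardI : #|v |: I'|%:R = 1 + #|I'|%:R :> R.
  by rewrite cardsU1 (contra (subsetP I'U' v) vU') add1n -natr1 addrC.
exists (v |: I').
  by apply/subsetP => j /setU1P[-> // | /(subsetP I'U')]; rewrite inE => /andP[].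
rewrite cardI; split.
- apply: independent_setU1 => // j /(subsetP I'U') /setDP[jU jB].
  by apply: contra jB => evj; rewrite /closed_nbhd_in !inE jU evj orbT.
- by apply: le_trans le_step _; rewrite lerD2l.
- move=> /lt_step [lt_U | /ltI' lt_U']; first by apply: lt_le_trans lt_U _; rewrite lerD2l.
  by apply: le_lt_trans le_step _; rewrite ltrD2l.
Qed.

End CaroWei.

Lemma caro_wei_sum_setT (R : realFieldType) n (e : rel 'I_n) :
  caro_wei_sum R e setT = \sum_(i < n) ((degree e i).+1%:R)^-1.
Proof.
rewrite /caro_wei_sum; apply: eq_big => [i | i _]; first by rewrite inE.
by rewrite /deg_in /degree /nbhd_in; congr (_.+1%:R^-1); apply/eq_card => j; rewrite !inE.
Qed.

Lemma indep_number_max n (e : rel 'I_n) (I : {set 'I_n}) :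
  independent e I -> (#|I| <= indep_number e)%N.
Proof. exact: leq_bigmax_cond. Qed.

Lemma sum_inv_degree_lt_indep_number (R : realFieldType) n (e : rel 'I_n) :
  simple_graph e -> ~ disjoint_union_of_cliques e ->
  \sum_(i < n) ((degree e i).+1%:R : R)^-1 < (indep_number e)%:R.
Proof.
move=> [esym eirr] /not_cliques_induced_P3 P3.
have [I _ [indI _ /(_ P3) lt_I]] := caro_wei R esym eirr setT.
rewrite -caro_wei_sum_setT; apply: lt_le_trans lt_I _.
by rewrite ler_nat indep_number_max.
Qed.

Lemma sum_inv_degree_ge0 (R : realFieldType) n (e : rel 'I_n) :
  0 <= \sum_(i < n) ((degree e i).+1%:R : R)^-1.
Proof. by apply: sumr_ge0 => i _; rewrite invr_ge0. Qed.

Lemma foc_term_le (R : realFieldType) (d z0 z : R) :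
  0 < d -> 0 <= z0 -> 0 < z -> d / (z0 + d * z) ^+ 2 <= d^-1 / z ^+ 2.
Proof.
move=> d_gt0 z0_ge0 z_gt0.
have -> : d^-1 / z ^+ 2 = d / (d * z) ^+ 2 by field; rewrite !gt_eqF.
have dz_gt0 : 0 < d * z by rewrite mulr_gt0.
rewrite ler_pM2l // lef_pV2 ?posrE ?exprn_gt0 ?ltr_wpDl //.
by rewrite ler_pXn2r ?nnegrE ?addr_ge0 ?(ltW dz_gt0) // lerDr.
Qed.

Lemma welfare_foc_le (R : realFieldType) n (e : rel 'I_n) (z0 z : R) :
  0 <= z0 -> 0 < z ->
  welfare_foc e z0 z <= (\sum_(i < n) ((degree e i).+1%:R)^-1) / z ^+ 2.
Proof.
move=> z0_ge0 z_gt0; rewrite /welfare_foc mulr_suml.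
by apply: ler_sum => i _; apply: foc_term_le; rewrite ?ltr0Sn.
Qed.

Lemma welfare_precision_le (R : rcfType) n (e : rel 'I_n) (gamma z0 z : R) :
  0 < gamma -> 0 <= z0 -> 0 < z -> welfare_foc e z0 z = gamma ->
  z <= Num.sqrt ((\sum_(i < n) ((degree e i).+1%:R)^-1) / gamma).
Proof.
move=> gamma_gt0 z0_ge0 z_gt0 foc.
have := welfare_foc_le e z0_ge0 z_gt0; rewrite foc => le_gamma.
rewrite -(ger0_norm (ltW z_gt0)) -sqrtr_sqr ler_sqrt; last first.
  by rewrite divr_ge0 ?sum_inv_degree_ge0 ?ltW.
by rewrite ler_pdivlMr // mulrC -ler_pdivlMr ?exprn_gt0.
Qed.

Theorem theorem2 (R : rcfType) (n : nat) (e : rel 'I_n) (gamma : R) :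
  simple_graph e ->
  0 < gamma ->
  ~ disjoint_union_of_cliques e ->
  exists2 zbar : R, 0 < zbar &
    forall z0 : R, 0 < z0 -> z0 < zbar ->
    forall zstar : R, 0 < zstar -> welfare_foc e z0 zstar = gamma ->
      zstar < z_seller e gamma z0.
Proof.
move=> simple_e gamma_gt0 not_cliques.
pose S := \sum_(i < n) ((degree e i).+1%:R : R)^-1.
have S_lt_alpha : S < (indep_number e)%:R.
  exact: sum_inv_degree_lt_indep_number simple_e not_cliques.
exists (Num.sqrt ((indep_number e)%:R / gamma) - Num.sqrt (S / gamma)).
  rewrite subr_gt0 ltr_sqrt ?ltr_pM2r ?invr_gt0 // divr_gt0 //.
  exact: le_lt_trans (sum_inv_degree_ge0 R e) S_lt_alpha.
move=> z0 z0_gt0 z0_lt zs zs_gt0 foc.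
have := welfare_precision_le gamma_gt0 (ltW z0_gt0) zs_gt0 foc.
rewrite /z_seller -/S; lra.
Qed.
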